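(* Let $m,n$ be positive integers and $x>2$ real. Define $\alpha_j>0$ ($1\le j\le n$) and $\beta_k>0$ ($1\le k\le m$) by $$\cosh\alpha_j+\cos\frac{\pi j}{n+1}=x=\cosh\beta_k+\cos\frac{\pi k}{m+1}.$$ Then $$\prod_{j=1}^n\frac{\sinh\big((m+1)\alpha_j\big)}{\sinh\alpha_j}=\prod_{k=1}^m\frac{\sinh\big((n+1)\beta_k\big)}{\sinh\beta_k}.$$ *)

From Stdlib Require Import Reals Lra Lia.
Open Scope R_scope.

Fixpoint prod_1_to (n : nat) (f : nat -> R) : R :=
  match n with
  | O => 1
  | S k => prod_1_to k f * f (S k)
  end.

(** Both sides are the same double product.  With U_m the Chebyshev
    polynomial of the second kind, [sinh ((m+1) a) / sinh a = U_m (cosh a)], and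
    U_m has leading coefficient 2^m and the simple roots [cos (pi k/(m+1))],
    1 <= k <= m.  Hence, using [cosh (alpha j) = x - cos (pi j/(n+1))],
    the left-hand side is the product over all j, k of
    [2 (x - cos (pi j/(n+1)) - cos (pi k/(m+1)))], which is symmetric in
    (n, j) and (m, k). *)

From Stdlib Require Import Reals Lra Lia.
From mathcomp Require all_boot all_algebra Rstruct ring.
Open Scope R_scope.

Lemma sin_add_sub u a : sin (u + a) = 2 * cos a * sin u - sin (u - a).
Proof. rewrite sin_plus, sin_minus; ring. Qed.

Lemma sinh_add_sub u a : sinh (u + a) = 2 * cosh a * sinh u - sinh (u - a).
Proof.
  unfold sinh, cosh, Rminus.
  rewrite !Ropp_plus_distr, !exp_plus, !Ropp_involutive, !exp_Ropp.
  pose proof (exp_pos u); pose proof (exp_pos a); field; lra.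
Qed.

Lemma prod_1_to_ext n f g : (forall k, (1 <= k <= n)%nat -> f k = g k) ->
  prod_1_to n f = prod_1_to n g.
Proof.
  induction n as [|n IH]; intros Hfg; simpl; auto.
  rewrite IH, Hfg; auto with arith.
  intros k Hk; apply Hfg; lia.
Qed.

Lemma prod_1_to_mul n f g :
  prod_1_to n (fun k => f k * g k) = prod_1_to n f * prod_1_to n g.
Proof. induction n as [|n IH]; simpl; [ring | rewrite IH; ring]. Qed.

Lemma prod_1_to_comm n m (F : nat -> nat -> R) :
  prod_1_to n (fun j => prod_1_to m (fun k => F j k)) =
  prod_1_to m (fun k => prod_1_to n (fun j => F j k)).
Proof.
  induction n as [|n IH]; simpl.
  - induction m as [|m IHm]; simpl; [reflexivity | rewrite <- IHm; ring].
  - rewrite IH, <- prod_1_to_mul; reflexivity.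
Qed.

Definition cheb_angle (m k : nat) : R := PI * INR k / INR (m + 1).

Lemma INR_succ_pos m : 0 < INR (m + 1).
Proof. apply lt_0_INR; lia. Qed.

Lemma cheb_angle_bounds m k : (1 <= k <= m)%nat -> 0 < cheb_angle m k < PI.
Proof.
  intros Hk; unfold cheb_angle.
  pose proof PI_RGT_0; pose proof (INR_succ_pos m).
  assert (0 < INR k) by (apply lt_0_INR; lia).
  assert (INR k < INR (m + 1)) by (apply lt_INR; lia).
  split.
  - apply Rdiv_lt_0_compat; nra.
  - apply Rmult_lt_reg_r with (INR (m + 1)); [lra |].
    unfold Rdiv; rewrite Rmult_assoc, Rinv_l; nra.
Qed.

Lemma sin_mul_cheb_angle m k : sin (INR (m + 1) * cheb_angle m k) = 0.
Proof.
  apply sin_eq_0_1; exists (Z.of_nat k); rewrite <- INR_IZR_INZ.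
  unfold cheb_angle; pose proof (INR_succ_pos m); field; lra.
Qed.

Lemma cos_cheb_angle_inj m k l : (1 <= k <= m)%nat -> (1 <= l <= m)%nat ->
  cos (cheb_angle m k) = cos (cheb_angle m l) -> k = l.
Proof.
  intros Hk Hl E; apply INR_eq.
  pose proof (cheb_angle_bounds m k Hk); pose proof (cheb_angle_bounds m l Hl).
  apply cos_inj in E; try lra.
  pose proof PI_RGT_0; pose proof (INR_succ_pos m).
  apply Rmult_eq_reg_l with (PI / INR (m + 1)); [| apply Rgt_not_eq, Rdiv_lt_0_compat; lra].
  unfold cheb_angle in E; rewrite !(Rmult_comm (PI / _)); unfold Rdiv in *.
  rewrite <- !Rmult_assoc, !(Rmult_comm _ PI); exact E.
Qed.

Module Chebyshev.
Import all_boot all_algebra Rstruct ring.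
Import GRing.Theory Num.Theory.

Section SecondKind.
Variable A : comNzRingType.
Local Open Scope ring_scope.

Fixpoint chebU (n : nat) : {poly A} :=
  match n with
  | 0 => 1
  | 1 => 'X *+ 2
  | (k.+1 as n1).+1 => chebU n1 * 'X *+ 2 - chebU k
  end.

Lemma horner_chebU_sine (T : zmodType) (s c : T -> A) :
    s 0 = 0 -> (forall u a, s (u + a) = 2 * c a * s u - s (u - a)) ->
  forall n a, (chebU n).[c a] * s a = s (a *+ n.+1).
Proof.
move=> s0 s_rec n a.
suff [] : (chebU n).[c a] * s a = s (a *+ n.+1) /\
          (chebU n.+1).[c a] * s a = s (a *+ n.+2) by [].
elim: n => [|n [IH1 IH2]].
  by rewrite /= -polyC1 hornerC mul1r hornerMn hornerX s_rec subrr s0 subr0 mulr_natl.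
split=> //=; rewrite hornerD hornerN hornerMn hornerMX.
by rewrite [a *+ n.+3]mulrSr s_rec -IH2 mulrSr addrK -IH1; ring.
Qed.
End SecondKind.

Section Factorization.
Variable F : fieldType.
Local Open Scope ring_scope.
Hypothesis two_neq0 : 2 != 0 :> F.

Lemma size_lead_coef_chebU n :
  size (chebU F n) = n.+1 /\ lead_coef (chebU F n) = 2 ^+ n.
Proof.
have size_lead_rec (p q : {poly F}) k :
    size p = k.+1 -> lead_coef p = 2 ^+ k -> (size q <= k.+1)%N ->
    size (p * 'X *+ 2 - q) = k.+2 /\ lead_coef (p * 'X *+ 2 - q) = 2 ^+ k.+1.
  move=> sp lp sq; have p_neq0 : p != 0 by rewrite -size_poly_eq0 sp.
  have s2 : size (p * 'X *+ 2) = k.+2.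
    by rewrite -scaler_nat size_scale // size_mulX // sp.
  have ltq : (size (- q) < size (p * 'X *+ 2))%N by rewrite size_polyN s2.
  rewrite size_polyDl // s2 lead_coefDl // -scaler_nat lead_coefZ lead_coefMX lp.
  by rewrite -exprS.
suff [] : [/\ size (chebU F n) = n.+1, lead_coef (chebU F n) = 2 ^+ n,
   size (chebU F n.+1) = n.+2 & lead_coef (chebU F n.+1) = 2 ^+ n.+1] by [].
elim: n => [|n [s0 _ s1 l1]].
  rewrite /= size_poly1 lead_coef1 -scaler_nat size_scale // size_polyX.
  by rewrite lead_coefZ lead_coefX mulr1.
by have [] := size_lead_rec _ (chebU F n) _ s1 l1 (leqW (eq_leq s0)).
Qed.

Lemma chebU_prod_XsubC n rs : size rs = n -> all (root (chebU F n)) rs -> uniq rs ->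
  chebU F n = 2 ^+ n *: \prod_(z <- rs) ('X - z%:P).
Proof.
move=> size_rs rootsU uniq_rs; have [sizeU leadU] := size_lead_coef_chebU n.
by rewrite -leadU; apply: all_roots_prod_XsubC; rewrite ?uniq_rootsE ?sizeU ?size_rs.
Qed.
End Factorization.

Section RealNodes.
Local Open Scope ring_scope.

Lemma prod_1_to_big n (f : nat -> R) : prod_1_to n f = \prod_(1 <= k < n.+1) f k.
Proof.
elim: n => [|n IH]; first by rewrite big_geq.
by rewrite big_nat_recr //= IH.
Qed.

Lemma horner_chebU_cos n a : (chebU R n).[cos a] * sin a = sin (a *+ n.+1).
Proof.
by apply: horner_chebU_sine => [|u b]; [exact: sin_0 | exact: sin_add_sub].
Qed.

Lemma horner_chebU_cosh n a : (chebU R n).[cosh a] * sinh a = sinh (a *+ n.+1).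
Proof.
by apply: horner_chebU_sine => [|u b]; [exact: sinh_0 | exact: sinh_add_sub].
Qed.

Lemma root_chebU_cos_angle m k :
  (0 < k <= m)%N -> root (chebU R m) (cos (cheb_angle m k)).
Proof.
move=> /andP[/leP k_ge1 /leP k_le_m].
have [angle_gt0 angle_ltPI] := cheb_angle_bounds m k (conj k_ge1 k_le_m).
have := horner_chebU_cos m (cheb_angle m k).
rewrite -mulr_natl -INRE -addn1 sin_mul_cheb_angle => /eqP.
rewrite mulf_eq0 => /orP[//|/eqP sin_eq0].
by have := sin_gt_0 _ angle_gt0 angle_ltPI; rewrite sin_eq0 => /Rlt_irrefl.
Qed.

Lemma chebU_factor_cos_angle m :
  chebU R m = 2 ^+ m *: \prod_(1 <= k < m.+1) ('X - (cos (cheb_angle m k))%:P).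
Proof.
rewrite -(big_map (fun k => cos (cheb_angle m k)) xpredT (fun z => 'X - z%:P)).
apply: chebU_prod_XsubC; first by rewrite pnatr_eq0.
- by rewrite size_map size_iota subSS subn0.
- apply/allP => _ /mapP[k k_in ->]; apply: root_chebU_cos_angle.
  by rewrite mem_index_iota in k_in.
- rewrite map_inj_in_uniq ?iota_uniq // => k l.
  rewrite !mem_index_iota => /andP[/leP k_ge1 /ltP k_lt] /andP[/leP l_ge1 /ltP l_lt].
  by apply: cos_cheb_angle_inj; lia.
Qed.

Lemma horner_chebU_prod_cos_angle m x :
  (chebU R m).[x] = \prod_(1 <= k < m.+1) (2 * (x - cos (cheb_angle m k))).
Proof.
rewrite {1}chebU_factor_cos_angle hornerZ horner_prod big_split /=.
rewrite prodr_const_nat subSS subn0; congr (_ * _).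
by apply: eq_bigr => k _; rewrite hornerXsubC.
Qed.

End RealNodes.

Lemma sinh_mul_div_sinh_prod m a : sinh a <> 0 ->
  sinh (INR (m + 1) * a) / sinh a = prod_1_to m (fun k => 2 * (cosh a - cos (cheb_angle m k))).
Proof.
move=> /eqP sinh_neq0; rewrite prod_1_to_big.
transitivity ((chebU R m).[cosh a])%R; last exact: horner_chebU_prod_cos_angle.
by rewrite INRE [X in sinh X]RmultE mulr_natl addn1 -horner_chebU_cosh RdivE mulfK.
Qed.

End Chebyshev.

Lemma sinh_neq0 a : 0 < a -> sinh a <> 0.
Proof.
  intros Ha; pose proof (sinh_lt 0 a Ha) as Hlt; rewrite sinh_0 in Hlt; lra.
Qed.

Lemma prod_sinh_ratio_double_prod n m x (alpha : nat -> R) :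
  (forall j, (1 <= j <= n)%nat -> 0 < alpha j) ->
  (forall j, (1 <= j <= n)%nat -> cosh (alpha j) + cos (cheb_angle n j) = x) ->
  prod_1_to n (fun j => sinh (INR (m + 1) * alpha j) / sinh (alpha j)) =
  prod_1_to n (fun j => prod_1_to m (fun k =>
    2 * (x - cos (cheb_angle n j) - cos (cheb_angle m k)))).
Proof.
  intros Hpos Hx; apply prod_1_to_ext; intros j Hj.
  rewrite Chebyshev.sinh_mul_div_sinh_prod by (apply sinh_neq0; auto).
  apply prod_1_to_ext; intros k _; rewrite <- (Hx j Hj); ring.
Qed.

Theorem mainTheorem11 (m n : nat) (x : R) (alpha beta : nat -> R)
  (hm : (1 <= m)%nat) (hn : (1 <= n)%nat) (hx : 2 < x)
  (halpha_pos : forall j, (1 <= j <= n)%nat -> 0 < alpha j)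
  (halpha : forall j, (1 <= j <= n)%nat ->
     cosh (alpha j) + cos (PI * INR j / INR (n + 1)) = x)
  (hbeta_pos : forall k, (1 <= k <= m)%nat -> 0 < beta k)
  (hbeta : forall k, (1 <= k <= m)%nat ->
     cosh (beta k) + cos (PI * INR k / INR (m + 1)) = x) :
  prod_1_to n (fun j => sinh (INR (m + 1) * alpha j) / sinh (alpha j)) =
  prod_1_to m (fun k => sinh (INR (n + 1) * beta k) / sinh (beta k)).
Proof.
  (* [hx] only ensures that such alpha, beta exist; the identity needs just positivity. *)
  rewrite (prod_sinh_ratio_double_prod n m x alpha halpha_pos halpha).
  rewrite (prod_sinh_ratio_double_prod m n x beta hbeta_pos hbeta).
  rewrite prod_1_to_comm.
  apply prod_1_to_ext; intros k _; apply prod_1_to_ext; intros j _; ring.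
Qed.
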